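(* $\mathcal C_q^{\infty,\infty,4,3}\neq\mathcal C_{qs}^{\infty,\infty,4,3}$.
   Context: A strategy: Hilbert spaces $\mathcal H_A,\mathcal H_B$ (possibly infinite-dimensional), a unit vector $|\psi\rangle\in\mathcal H_A\otimes\mathcal H_B$, and for each question a projective measurement $\{A^a_x\}_{a}$ on $\mathcal H_A$, $\{B^b_y\}_{b}$ on $\mathcal H_B$, producing $p(a,b|x,y)=\langle\psi|A^a_x\otimes B^b_y|\psi\rangle$. $\mathcal C_{qs}^{\infty,\infty,4,3}$ is the set of correlations with countably infinite question sets and answer sets of sizes 4 (Alice) and 3 (Bob) produced by some strategy; $\mathcal C_{q}^{\infty,\infty,4,3}$ is the subset produced by strategies whose state $|\psi\rangle$ has finite Schmidt rank. *)

(* Hilbert spaces are modelled concretely as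
   l^2(I) over complex numbers for an arbitrary index type I (every Hilbert
   space is isometric to some l^2(I)); the tensor product l^2(I) (x) l^2(J) is
   l^2(I * J). *)
From Stdlib Require Import Reals List.
Import ListNotations.
Open Scope R_scope.

Record C : Type := mkC { Re : R ; Im : R }.
Definition Cadd (z w : C) : C := mkC (Re z + Re w) (Im z + Im w).
Definition Cmul (z w : C) : C :=
  mkC (Re z * Re w - Im z * Im w) (Re z * Im w + Im z * Re w).
Definition Cconj (z : C) : C := mkC (Re z) (- Im z).
Definition Cnorm2 (z : C) : R := Re z * Re z + Im z * Im z.
Definition C0 : C := mkC 0 0.

Fixpoint Csum (n : nat) (f : nat -> C) : C :=
  match n with
  | O => C0
  | S m => Cadd (Csum m f) (f m)
  end.

(* has_sum_R f s : the net of finite partial sums (over finite subsets, given as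
   duplicate-free lists) converges to s. *)
Definition has_sum_R {T : Type} (f : T -> R) (s : R) : Prop :=
  forall eps : R, eps > 0 ->
    exists L0 : list T, forall L : list T, NoDup L -> incl L0 L ->
      Rabs (fold_right Rplus 0 (map f L) - s) < eps.

Definition has_sum_C {T : Type} (f : T -> C) (s : C) : Prop :=
  has_sum_R (fun t => Re (f t)) (Re s) /\ has_sum_R (fun t => Im (f t)) (Im s).

Definition l2 {I : Type} (u : I -> C) : Prop :=
  exists s : R, has_sum_R (fun i => Cnorm2 (u i)) s.

Definition inner {I : Type} (u v : I -> C) (z : C) : Prop :=
  has_sum_C (fun i => Cmul (Cconj (u i)) (v i)) z.

Definition unit_vector {I : Type} (u : I -> C) : Prop :=
  has_sum_R (fun i => Cnorm2 (u i)) 1.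

(* operators on l^2(I) (only their action on l^2 vectors matters) *)
Definition op (I : Type) : Type := (I -> C) -> (I -> C).

Definition is_projection {I : Type} (P : op I) : Prop :=
  (forall u, l2 u -> l2 (P u)) /\
  (forall u v, l2 u -> l2 v -> forall i,
       P (fun k => Cadd (u k) (v k)) i = Cadd (P u i) (P v i)) /\
  (forall (c : C) u, l2 u -> forall i,
       P (fun k => Cmul c (u k)) i = Cmul c (P u i)) /\
  (forall u, l2 u -> forall i, P (P u) i = P u i) /\
  (forall u v z, l2 u -> l2 v -> inner (P u) v z -> inner u (P v) z).

Definition PVM_family {I : Type} (n : nat) (M : nat -> nat -> op I) : Prop :=
  (forall x a, (a < n)%nat -> is_projection (M x a)) /\
  (forall x u, l2 u -> forall i, Csum n (fun a => M x a u i) = u i).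

Definition tensor_apply {I J : Type} (A : op I) (B : op J) (psi : I * J -> C)
  : I * J -> C :=
  fun ij => A (fun i' => B (fun j' => psi (i', j')) (snd ij)) (fst ij).

Definition produces {I J : Type} (nA nB : nat) (psi : I * J -> C)
  (A : nat -> nat -> op I) (B : nat -> nat -> op J)
  (p : nat -> nat -> nat -> nat -> R) : Prop :=
  unit_vector psi /\ PVM_family nA A /\ PVM_family nB B /\
  forall x y a b, (a < nA)%nat -> (b < nB)%nat ->
    inner psi (tensor_apply (A x a) (B y b) psi) (mkC (p x y a b) 0).

Definition finite_schmidt_rank {I J : Type} (psi : I * J -> C) : Prop :=
  exists (r : nat) (u : nat -> I -> C) (v : nat -> J -> C),
    (forall k, (k < r)%nat -> l2 (u k) /\ l2 (v k)) /\
    forall i j, psi (i, j) = Csum r (fun k => Cmul (u k i) (v k j)).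

(* Correlations p x y a b (questions x, y : nat, countably infinite; only the
   values with a < nA, b < nB are meaningful; other values are unconstrained). *)
Definition C_qs (nA nB : nat) (p : nat -> nat -> nat -> nat -> R) : Prop :=
  exists (I J : Type) (psi : I * J -> C) (A : nat -> nat -> op I)
         (B : nat -> nat -> op J), produces nA nB psi A B p.

Definition C_q (nA nB : nat) (p : nat -> nat -> nat -> nat -> R) : Prop :=
  exists (I J : Type) (psi : I * J -> C) (A : nat -> nat -> op I)
         (B : nat -> nat -> op J),
    produces nA nB psi A B p /\ finite_schmidt_rank psi.

(* For a state of finite Schmidt rank, psi = sum_k u_k (x) v_k, every table
   (x, y) |-> p(a,b|x,y) is a real kernel of finite rank: it equals
   sum_{k,l} <u_k|A^a_x u_l> <v_k|B^b_y v_l>.  The infinitely entangled state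
   psi ~ sum_i 2^-i |i>|i>, measured by both parties with the projections onto
   |x> (answer 0) and its complement (answer 1), gives instead
   p(0,0|x,y) = delta_xy 4^-x / |psi|^2, a diagonal kernel with nonzero diagonal;
   its (m+1) x (m+1) corner is invertible, so its rank exceeds every m. *)

From Pilot Require Import Defs.
From Stdlib Require Import Reals Lra Lia List Classical ClassicalEpsilon FunctionalExtensionality.
(* Re-imported so that [C] denotes the complex numbers, not the binomial [C] of Reals. *)
Import ListNotations Defs.
Open Scope R_scope.

(** * Unordered sums *)

Notation lsum f L := (fold_right Rplus 0 (map f L)).

Lemma lsum_app {T} (f : T -> R) L1 L2 : lsum f (L1 ++ L2) = lsum f L1 + lsum f L2.
Proof. induction L1 as [|t L1 IH]; simpl; [ring | rewrite IH; ring]. Qed.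

Lemma lsum_plus {T} (f g : T -> R) L : lsum (fun t => f t + g t) L = lsum f L + lsum g L.
Proof. induction L as [|t L IH]; simpl; [ring | rewrite IH; ring]. Qed.

Lemma lsum_scal {T} c (f : T -> R) L : lsum (fun t => c * f t) L = c * lsum f L.
Proof. induction L as [|t L IH]; simpl; [ring | rewrite IH; ring]. Qed.

Lemma lsum_eq0 {T} (f : T -> R) L : (forall t, In t L -> f t = 0) -> lsum f L = 0.
Proof.
  induction L as [|t L IH]; intros H; simpl; [ring|].
  rewrite (H t (or_introl eq_refl)), IH; [ring | intros s Hs; apply H; right; exact Hs].
Qed.

Lemma lsum_le {T} (f g : T -> R) L : (forall t, f t <= g t) -> lsum f L <= lsum g L.
Proof. intros H; induction L as [|t L IH]; simpl; [lra | specialize (H t); lra]. Qed.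

Lemma lsum_ge0 {T} (f : T -> R) L : (forall t, 0 <= f t) -> 0 <= lsum f L.
Proof. intros H; induction L as [|t L IH]; simpl; [lra | specialize (H t); lra]. Qed.

Lemma lsum_incl {T} (f : T -> R) L1 L2 : (forall t, 0 <= f t) ->
  NoDup L1 -> incl L1 L2 -> lsum f L1 <= lsum f L2.
Proof.
  intros Hf HN; revert L2; induction HN as [|t L1 Hnot HN IH]; intros L2 Hi.
  - apply lsum_ge0, Hf.
  - destruct (in_split t L2) as [l [l' ->]]; [apply Hi; left; auto|].
    assert (Hi' : incl L1 (l ++ l')).
    { intros s Hs. assert (Hs' : In s (l ++ t :: l')) by (apply Hi; right; auto).
      apply in_app_iff in Hs' as [|[->|]]; apply in_app_iff; tauto. }
    specialize (IH _ Hi'). rewrite lsum_app in *. simpl. lra.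
Qed.

Lemma lsum_list_prod {I J} (f : I -> R) (g : J -> R) L1 L2 :
  lsum (fun p => f (fst p) * g (snd p)) (list_prod L1 L2) = lsum f L1 * lsum g L2.
Proof.
  induction L1 as [|i L1 IH]; simpl; [ring|].
  rewrite lsum_app, IH, map_map. simpl. rewrite lsum_scal. ring.
Qed.

Lemma NoDup_list_prod {I J} (L1 : list I) (L2 : list J) :
  NoDup L1 -> NoDup L2 -> NoDup (list_prod L1 L2).
Proof.
  intros H1 H2. induction H1 as [|i L1 Hi H1 IH]; simpl; [constructor|].
  apply NoDup_app; auto.
  - apply NoDup_map_NoDup_ForallPairs; auto. intros j j' _ _ E. congruence.
  - intros p Hp Hp'. apply in_map_iff in Hp as [j [<- _]].
    apply in_prod_iff in Hp' as []; auto.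
Qed.

Lemma NoDup_incl_exists {T} (L : list T) : exists L', NoDup L' /\ incl L L'.
Proof.
  exists (nodup (fun x y => excluded_middle_informative (x = y)) L).
  split; [apply NoDup_nodup | intros t Ht; apply nodup_In, Ht].
Qed.

Lemma NoDup_incl_app_exists {T} (L1 L2 : list T) :
  exists L, NoDup L /\ incl L1 L /\ incl L2 L.
Proof.
  destruct (NoDup_incl_exists (L1 ++ L2)) as [L [HN Hi]].
  apply incl_app_inv in Hi. exists L; tauto.
Qed.

Lemma Rabs_lt_between x e : Rabs x < e <-> - e < x < e.
Proof. unfold Rabs; destruct (Rcase_abs x); split; intros; lra. Qed.

Lemma has_sum_R_ext {T} (f g : T -> R) s :
  (forall t, f t = g t) -> has_sum_R f s -> has_sum_R g s.
Proof. intros H. replace g with f; [auto | apply functional_extensionality, H]. Qed.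

Lemma has_sum_R_unique {T} (f : T -> R) a b : has_sum_R f a -> has_sum_R f b -> a = b.
Proof.
  intros Ha Hb. apply NNPP; intros Hne.
  assert (He : Rabs (a - b) / 2 > 0) by (assert (Rabs (a - b) > 0) by (apply Rabs_pos_lt; lra); lra).
  destruct (Ha _ He) as [La HLa], (Hb _ He) as [Lb HLb].
  destruct (NoDup_incl_app_exists La Lb) as [L [HN [HiA HiB]]].
  specialize (HLa L HN HiA). specialize (HLb L HN HiB).
  apply Rabs_lt_between in HLa, HLb.
  unfold Rabs in *. destruct (Rcase_abs (a - b)); lra.
Qed.

Lemma has_sum_R_plus {T} (f g : T -> R) a b :
  has_sum_R f a -> has_sum_R g b -> has_sum_R (fun t => f t + g t) (a + b).
Proof.
  intros Ha Hb e He.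
  destruct (Ha (e/2)) as [La HLa], (Hb (e/2)) as [Lb HLb]; [lra ..|].
  exists (La ++ Lb). intros L HN Hi. apply incl_app_inv in Hi as [HiA HiB].
  specialize (HLa L HN HiA). specialize (HLb L HN HiB).
  rewrite lsum_plus. apply Rabs_lt_between in HLa, HLb. apply Rabs_lt_between. lra.
Qed.

Lemma has_sum_R_scal {T} (f : T -> R) c a :
  has_sum_R f a -> has_sum_R (fun t => c * f t) (c * a).
Proof.
  intros Ha e He. assert (Hc := Rabs_pos c).
  assert (Hd : e / (Rabs c + 1) > 0) by (apply Rdiv_lt_0_compat; lra).
  destruct (Ha _ Hd) as [L0 HL0]. exists L0. intros L HN Hi. specialize (HL0 L HN Hi).
  rewrite lsum_scal, <- Rmult_minus_distr_l, Rabs_mult.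
  assert (Ed : (Rabs c + 1) * (e / (Rabs c + 1)) = e) by (field; lra).
  pose proof (Rabs_pos (lsum f L - a)). nra.
Qed.

Lemma has_sum_R_0 {T} : has_sum_R (fun _ : T => 0) 0.
Proof.
  intros e He. exists []. intros L _ _.
  rewrite lsum_eq0 by auto. rewrite Rminus_0_r, Rabs_R0. exact He.
Qed.

Lemma has_sum_R_minus {T} (f g : T -> R) a b :
  has_sum_R f a -> has_sum_R g b -> has_sum_R (fun t => f t - g t) (a - b).
Proof.
  intros Ha Hb. apply (has_sum_R_scal _ (-1)) in Hb.
  replace (a - b) with (a + -1 * b) by ring.
  eapply has_sum_R_ext; [|exact (has_sum_R_plus _ _ _ _ Ha Hb)]. intros; simpl; ring.
Qed.

Lemma has_sum_R_single {T} (f : T -> R) t0 :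
  (forall t, t <> t0 -> f t = 0) -> has_sum_R f (f t0).
Proof.
  intros Hz e He. exists [t0]. intros L HN Hi.
  destruct (in_split t0 L) as [l1 [l2 ->]]; [apply Hi; left; auto|].
  apply NoDup_remove_2 in HN.
  rewrite lsum_app. simpl. rewrite !lsum_eq0.
  - apply Rabs_lt_between. lra.
  - intros t Ht. apply Hz. intros ->. apply HN, in_or_app. auto.
  - intros t Ht. apply Hz. intros ->. apply HN, in_or_app. auto.
Qed.

Lemma has_sum_R_approx {T} (f : T -> R) s : has_sum_R f s ->
  forall e, e > 0 -> exists L, NoDup L /\ s - e < lsum f L.
Proof.
  intros Hs e He. destruct (Hs e He) as [L0 HL0].
  destruct (NoDup_incl_exists L0) as [L [HN Hi]]. exists L. split; auto.
  specialize (HL0 L HN Hi). apply Rabs_lt_between in HL0. lra.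
Qed.

Section NonnegativeSums.

Context {T : Type} (f : T -> R) (f_ge0 : forall t, 0 <= f t).

Lemma has_sum_R_ge_lsum s : has_sum_R f s -> forall L, NoDup L -> lsum f L <= s.
Proof.
  intros Hs L HN. apply Rnot_lt_le. intros Hlt.
  destruct (Hs (lsum f L - s)) as [L0 HL0]; [lra|].
  destruct (NoDup_incl_app_exists L0 L) as [L' [HN' [Hi0 Hi]]].
  specialize (HL0 L' HN' Hi0). apply Rabs_lt_between in HL0.
  assert (lsum f L <= lsum f L') by (apply lsum_incl; auto). lra.
Qed.

Lemma has_sum_R_ge0 s : has_sum_R f s -> 0 <= s.
Proof. intros Hs. exact (has_sum_R_ge_lsum s Hs [] (NoDup_nil _)). Qed.

Lemma has_sum_R_sup s :
  (forall L, NoDup L -> lsum f L <= s) ->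
  (forall e, e > 0 -> exists L, NoDup L /\ s - e < lsum f L) -> has_sum_R f s.
Proof.
  intros Hup Happrox e He. destruct (Happrox e He) as [L0 [HN0 H0]].
  exists L0. intros L HN Hi.
  assert (lsum f L0 <= lsum f L) by (apply lsum_incl; auto).
  specialize (Hup L HN). apply Rabs_lt_between. lra.
Qed.

(* The sum is the least upper bound of the finite sums. *)
Lemma summable_bounded B : (forall L, NoDup L -> lsum f L <= B) -> exists s, has_sum_R f s.
Proof.
  intros HB.
  set (E := fun x => exists L, NoDup L /\ x = lsum f L).
  destruct (completeness E) as [s [Hub Hlub]].
  - exists B. intros x [L [HN ->]]. auto.
  - exists 0, []. split; [constructor | reflexivity].
  - exists s. apply has_sum_R_sup.
    + intros L HN. apply Hub. exists L. auto.
    + intros e He. apply NNPP. intros Hno.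
      enough (s <= s - e) by lra.
      apply Hlub. intros x [L [HN ->]]. apply Rnot_lt_le. intros Hlt. apply Hno. exists L. auto.
Qed.

End NonnegativeSums.

Lemma summable_le {T} (f g : T -> R) G : (forall t, 0 <= f t) ->
  (forall t, f t <= g t) -> has_sum_R g G -> exists s, has_sum_R f s.
Proof.
  intros f_ge0 Hfg Hg. apply (summable_bounded f f_ge0 G). intros L HN.
  apply Rle_trans with (lsum g L); [apply lsum_le; auto|].
  apply (has_sum_R_ge_lsum g); auto. intros t. specialize (f_ge0 t). specialize (Hfg t). lra.
Qed.

Definition pos_part (x : R) : R := Rmax x 0.
Definition neg_part (x : R) : R := Rmax (- x) 0.

Lemma pos_part_sub_neg_part x : pos_part x - neg_part x = x.
Proof. unfold pos_part, neg_part, Rmax. repeat destruct Rle_dec; lra. Qed.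

Lemma pos_part_bounds x : 0 <= pos_part x <= Rabs x.
Proof. unfold pos_part, Rmax, Rabs. destruct Rle_dec, Rcase_abs; lra. Qed.

Lemma neg_part_bounds x : 0 <= neg_part x <= Rabs x.
Proof. unfold neg_part, Rmax, Rabs. destruct Rle_dec, Rcase_abs; lra. Qed.

Definition abs_summable {T} (f : T -> R) : Prop :=
  exists (g : T -> R) (G : R), has_sum_R g G /\ forall t, Rabs (f t) <= g t.

Lemma abs_summable_parts {T} (f : T -> R) : abs_summable f ->
  exists sp sn, has_sum_R (fun t => pos_part (f t)) sp /\
                has_sum_R (fun t => neg_part (f t)) sn.
Proof.
  intros [g [G [HG Hfg]]].
  destruct (summable_le (fun t => pos_part (f t)) g G) as [sp Hsp]; auto;
    [intros t; apply pos_part_bounds | intros t; eapply Rle_trans; [apply pos_part_bounds | auto] |].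
  destruct (summable_le (fun t => neg_part (f t)) g G) as [sn Hsn]; auto;
    [intros t; apply neg_part_bounds | intros t; eapply Rle_trans; [apply neg_part_bounds | auto] |].
  exists sp, sn. auto.
Qed.

Lemma has_sum_R_parts {T} (f : T -> R) sp sn :
  has_sum_R (fun t => pos_part (f t)) sp -> has_sum_R (fun t => neg_part (f t)) sn ->
  has_sum_R f (sp - sn).
Proof.
  intros Hp Hn. eapply has_sum_R_ext; [|exact (has_sum_R_minus _ _ _ _ Hp Hn)].
  intros t. apply pos_part_sub_neg_part.
Qed.

Lemma abs_summable_summable {T} (f : T -> R) : abs_summable f -> exists s, has_sum_R f s.
Proof.
  intros Hf. destruct (abs_summable_parts f Hf) as [sp [sn [Hp Hn]]].
  exists (sp - sn). apply has_sum_R_parts; auto.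
Qed.

(* The finite sums over products [list_prod A B] of finite index lists are cofinal. *)
Lemma has_sum_R_mul_ge0 {I J} (f : I -> R) (g : J -> R) a b :
  (forall i, 0 <= f i) -> (forall j, 0 <= g j) -> has_sum_R f a -> has_sum_R g b ->
  has_sum_R (fun p : I * J => f (fst p) * g (snd p)) (a * b).
Proof.
  intros Hf Hg Ha Hb.
  assert (Ha0 := has_sum_R_ge0 f Hf a Ha). assert (Hb0 := has_sum_R_ge0 g Hg b Hb).
  assert (Hfg : forall p : I * J, 0 <= f (fst p) * g (snd p)).
  { intros p. apply Rmult_le_pos; auto. }
  apply has_sum_R_sup; auto.
  - intros L HN.
    destruct (NoDup_incl_exists (map fst L)) as [A [HA HiA]].
    destruct (NoDup_incl_exists (map snd L)) as [B [HB HiB]].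
    apply Rle_trans with (lsum (fun p : I * J => f (fst p) * g (snd p)) (list_prod A B)).
    + apply lsum_incl; auto. intros [i j] Hp. apply in_prod_iff.
      split; [apply HiA, (in_map fst _ (i, j)) | apply HiB, (in_map snd _ (i, j))]; auto.
    + rewrite lsum_list_prod.
      apply Rmult_le_compat; try apply lsum_ge0; auto;
        [apply (has_sum_R_ge_lsum f) | apply (has_sum_R_ge_lsum g)]; auto.
  - intros e He. set (d := e / (a + b + 1)).
    assert (Hd : d > 0) by (unfold d; apply Rdiv_lt_0_compat; lra).
    destruct (has_sum_R_approx f a Ha d Hd) as [A [HA HAd]].
    destruct (has_sum_R_approx g b Hb d Hd) as [B [HB HBd]].
    exists (list_prod A B). split; [apply NoDup_list_prod; auto|].
    rewrite lsum_list_prod.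
    assert (HAa := has_sum_R_ge_lsum f Hf a Ha A HA).
    assert (HBb := has_sum_R_ge_lsum g Hg b Hb B HB).
    assert (HA0 := lsum_ge0 f A Hf). assert (HB0 := lsum_ge0 g B Hg).
    assert (Ed : (a + b + 1) * d = e) by (unfold d; field; lra).
    nra.
Qed.

Lemma has_sum_R_mul {I J} (f : I -> R) (g : J -> R) a b :
  abs_summable f -> abs_summable g -> has_sum_R f a -> has_sum_R g b ->
  has_sum_R (fun p : I * J => f (fst p) * g (snd p)) (a * b).
Proof.
  intros Hf Hg Ha Hb.
  destruct (abs_summable_parts f Hf) as [ap [an [Hap Han]]].
  destruct (abs_summable_parts g Hg) as [bp [bn [Hbp Hbn]]].
  rewrite (has_sum_R_unique f a (ap - an)), (has_sum_R_unique g b (bp - bn));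
    try apply has_sum_R_parts; auto.
  assert (Pf := fun i => proj1 (pos_part_bounds (f i))).
  assert (Nf := fun i => proj1 (neg_part_bounds (f i))).
  assert (Pg := fun j => proj1 (pos_part_bounds (g j))).
  assert (Ng := fun j => proj1 (neg_part_bounds (g j))).
  assert (Hpp := has_sum_R_mul_ge0 _ _ _ _ Pf Pg Hap Hbp).
  assert (Hpn := has_sum_R_mul_ge0 _ _ _ _ Pf Ng Hap Hbn).
  assert (Hnp := has_sum_R_mul_ge0 _ _ _ _ Nf Pg Han Hbp).
  assert (Hnn := has_sum_R_mul_ge0 _ _ _ _ Nf Ng Han Hbn).
  replace ((ap - an) * (bp - bn)) with (ap * bp - ap * bn - an * bp + an * bn) by ring.
  eapply has_sum_R_ext;
    [|exact (has_sum_R_plus _ _ _ _ (has_sum_R_minus _ _ _ _ (has_sum_R_minus _ _ _ _ Hpp Hpn) Hnp) Hnn)].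
  intros [i j]; simpl.
  transitivity ((pos_part (f i) - neg_part (f i)) * (pos_part (g j) - neg_part (g j)));
    [ring | now rewrite !pos_part_sub_neg_part].
Qed.

(** * Complex sums, l^2 and projections *)

Lemma C_ext (z w : C) : Re z = Re w -> Im z = Im w -> z = w.
Proof. destruct z, w; simpl; intros -> ->; reflexivity. Qed.

Lemma Csum_ext n (f g : nat -> C) : (forall k, f k = g k) -> Csum n f = Csum n g.
Proof. intros H. replace g with f; [auto | apply functional_extensionality, H]. Qed.

Lemma Cconj_Csum n f : Cconj (Csum n f) = Csum n (fun k => Cconj (f k)).
Proof. induction n; simpl; [|rewrite <- IHn]; apply C_ext; simpl; ring. Qed.

Lemma Cmul_Csum_l n f z : Cmul (Csum n f) z = Csum n (fun k => Cmul (f k) z).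
Proof. induction n; simpl; [|rewrite <- IHn]; apply C_ext; simpl; ring. Qed.

Lemma Cmul_Csum_r n f z : Cmul z (Csum n f) = Csum n (fun k => Cmul z (f k)).
Proof. induction n; simpl; [|rewrite <- IHn]; apply C_ext; simpl; ring. Qed.

Lemma has_sum_C_ext {T} (f g : T -> C) z :
  (forall t, f t = g t) -> has_sum_C f z -> has_sum_C g z.
Proof. intros H. replace g with f; [auto | apply functional_extensionality, H]. Qed.

Lemma has_sum_C_unique {T} (f : T -> C) a b : has_sum_C f a -> has_sum_C f b -> a = b.
Proof.
  intros [Ha1 Ha2] [Hb1 Hb2].
  apply C_ext; [exact (has_sum_R_unique _ _ _ Ha1 Hb1) | exact (has_sum_R_unique _ _ _ Ha2 Hb2)].
Qed.

Lemma has_sum_C_plus {T} (f g : T -> C) a b : has_sum_C f a -> has_sum_C g b ->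
  has_sum_C (fun t => Cadd (f t) (g t)) (Cadd a b).
Proof. intros [] []. split; apply has_sum_R_plus; auto. Qed.

Lemma has_sum_C_Csum {T} n (F : nat -> T -> C) z :
  (forall k, (k < n)%nat -> has_sum_C (F k) (z k)) ->
  has_sum_C (fun t => Csum n (fun k => F k t)) (Csum n z).
Proof.
  induction n; intros H; simpl.
  - split; apply has_sum_R_0.
  - apply (has_sum_C_plus (fun t => Csum n (fun k => F k t)) (F n)); auto.
Qed.

Definition abs_summable_C {T} (f : T -> C) : Prop :=
  abs_summable (fun t => Re (f t)) /\ abs_summable (fun t => Im (f t)).

Lemma has_sum_C_mul {I J} (f : I -> C) (g : J -> C) a b :
  abs_summable_C f -> abs_summable_C g -> has_sum_C f a -> has_sum_C g b ->
  has_sum_C (fun p : I * J => Cmul (f (fst p)) (g (snd p))) (Cmul a b).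
Proof.
  intros [Hf1 Hf2] [Hg1 Hg2] [Ha1 Ha2] [Hb1 Hb2]. split; simpl.
  - exact (has_sum_R_minus _ _ _ _ (has_sum_R_mul _ _ _ _ Hf1 Hg1 Ha1 Hb1)
                                   (has_sum_R_mul _ _ _ _ Hf2 Hg2 Ha2 Hb2)).
  - exact (has_sum_R_plus _ _ _ _ (has_sum_R_mul _ _ _ _ Hf1 Hg2 Ha1 Hb2)
                                  (has_sum_R_mul _ _ _ _ Hf2 Hg1 Ha2 Hb1)).
Qed.

Lemma Cnorm2_ge0 z : 0 <= Cnorm2 z.
Proof. unfold Cnorm2. nra. Qed.

Lemma l2_0 {I} : l2 (fun _ : I => C0).
Proof. exists 0. eapply has_sum_R_ext; [|apply has_sum_R_0]. intros; unfold Cnorm2; simpl; ring. Qed.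

Lemma l2_add {I} (u v : I -> C) : l2 u -> l2 v -> l2 (fun i => Cadd (u i) (v i)).
Proof.
  intros [a Ha] [b Hb].
  eapply summable_le; [intros i; apply Cnorm2_ge0 | |
    exact (has_sum_R_plus _ _ _ _ (has_sum_R_scal _ 2 _ Ha) (has_sum_R_scal _ 2 _ Hb))].
  intros i. unfold Cnorm2. destruct (u i) as [x1 y1], (v i) as [x2 y2]; simpl.
  pose proof (Rle_0_sqr (x1 - x2)); pose proof (Rle_0_sqr (y1 - y2)); unfold Rsqr in *. lra.
Qed.

Lemma l2_scal {I} c (u : I -> C) : l2 u -> l2 (fun i => Cmul c (u i)).
Proof.
  intros [a Ha]. exists (Cnorm2 c * a).
  eapply has_sum_R_ext; [|exact (has_sum_R_scal _ (Cnorm2 c) _ Ha)].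
  intros i. unfold Cnorm2. destruct c, (u i); simpl. ring.
Qed.

Lemma l2_Csum {I} n (c : nat -> C) (w : nat -> I -> C) : (forall k, (k < n)%nat -> l2 (w k)) ->
  l2 (fun i => Csum n (fun k => Cmul (c k) (w k i))).
Proof.
  induction n; intros H; simpl.
  - apply l2_0.
  - apply (l2_add (fun i => Csum n (fun k => Cmul (c k) (w k i)))); auto. apply l2_scal; auto.
Qed.

Lemma abs_summable_C_inner {I} (u w : I -> C) : l2 u -> l2 w ->
  abs_summable_C (fun i => Cmul (Cconj (u i)) (w i)).
Proof.
  intros [a Ha] [b Hb].
  assert (Hs := has_sum_R_plus _ _ _ _ Ha Hb).
  split; exists (fun i => Cnorm2 (u i) + Cnorm2 (w i)), (a + b); split; auto;
    intros i; unfold Cnorm2; destruct (u i) as [x y], (w i) as [p q]; simpl;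
    pose proof (Rle_0_sqr (x - p)); pose proof (Rle_0_sqr (x + p));
    pose proof (Rle_0_sqr (y - q)); pose proof (Rle_0_sqr (y + q));
    pose proof (Rle_0_sqr (x - q)); pose proof (Rle_0_sqr (x + q));
    pose proof (Rle_0_sqr (y - p)); pose proof (Rle_0_sqr (y + p)); unfold Rsqr in *;
    apply Rabs_le; split; lra.
Qed.

Lemma inner_exists {I} (u v : I -> C) : l2 u -> l2 v -> exists z, inner u v z.
Proof.
  intros Hu Hv. destruct (abs_summable_C_inner u v Hu Hv) as [H1 H2].
  destruct (abs_summable_summable _ H1) as [a Ha], (abs_summable_summable _ H2) as [b Hb].
  exists (mkC a b). split; auto.
Qed.

Definition inner_val {I} (u v : I -> C) : C := epsilon (inhabits C0) (inner u v).

Lemma inner_valP {I} (u v : I -> C) : l2 u -> l2 v -> inner u v (inner_val u v).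
Proof. intros Hu Hv. unfold inner_val. apply epsilon_spec, inner_exists; auto. Qed.

Lemma projection_C0 {I} (P : op I) : is_projection P -> forall i, P (fun _ => C0) i = C0.
Proof.
  intros [_ [_ [Hscal _]]] i.
  replace (fun _ : I => C0) with (fun _ : I => Cmul C0 C0)
    by (apply functional_extensionality; intros; apply C_ext; simpl; ring).
  rewrite (Hscal C0 (fun _ => C0) l2_0). apply C_ext; simpl; ring.
Qed.

Lemma projection_Csum {I} (P : op I) n (c : nat -> C) (w : nat -> I -> C) :
  is_projection P -> (forall k, (k < n)%nat -> l2 (w k)) -> forall i,
  P (fun i' => Csum n (fun k => Cmul (c k) (w k i'))) i = Csum n (fun k => Cmul (c k) (P (w k) i)).
Proof.
  intros HP. induction n; intros Hw i; simpl.
  - apply projection_C0; auto.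
  - destruct HP as [_ [Hadd [Hscal _]]].
    rewrite (Hadd (fun i' => Csum n (fun k => Cmul (c k) (w k i'))) (fun i' => Cmul (c n) (w n i'))),
      Hscal, IHn; auto using l2_Csum, l2_scal.
Qed.

(** * Finite-rank kernels *)

Fixpoint Rsum (n : nat) (f : nat -> R) : R :=
  match n with O => 0 | S m => Rsum m f + f m end.

Lemma Rsum_ext n f g : (forall k, (k < n)%nat -> f k = g k) -> Rsum n f = Rsum n g.
Proof. induction n; intros H; simpl; auto. rewrite IHn, H; auto. Qed.

Lemma Rsum_add_range m n f : Rsum (m + n) f = Rsum m f + Rsum n (fun t => f (m + t)%nat).
Proof.
  induction n; simpl.
  - rewrite Nat.add_0_r. ring.
  - rewrite Nat.add_succ_r. simpl. rewrite IHn. ring.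
Qed.

Lemma Re_Csum n f : Re (Csum n f) = Rsum n (fun k => Re (f k)).
Proof. induction n; simpl; [|rewrite IHn]; reflexivity. Qed.

Definition rank_le (m : nat) (M : nat -> nat -> R) : Prop :=
  exists a b : nat -> nat -> R, forall x y, M x y = Rsum m (fun t => a t x * b t y).

Definition finite_rank (M : nat -> nat -> R) : Prop := exists m, rank_le m M.

Lemma finite_rank_ext M M' : (forall x y, M x y = M' x y) -> finite_rank M -> finite_rank M'.
Proof. intros E [m [a [b H]]]. exists m, a, b. intros x y. rewrite <- E. auto. Qed.

Lemma finite_rank_rank1 (al be : nat -> R) : finite_rank (fun x y => al x * be y).
Proof. exists 1%nat, (fun _ => al), (fun _ => be). intros x y. simpl. ring. Qed.

Lemma finite_rank_add M M' :
  finite_rank M -> finite_rank M' -> finite_rank (fun x y => M x y + M' x y).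
Proof.
  intros [m [a [b H]]] [m' [a' [b' H']]].
  exists (m + m')%nat, (fun t => if Nat.ltb t m then a t else a' (t - m)%nat),
         (fun t => if Nat.ltb t m then b t else b' (t - m)%nat).
  intros x y. rewrite Rsum_add_range, H, H'. f_equal; apply Rsum_ext; intros k Hk.
  - apply Nat.ltb_lt in Hk. rewrite Hk. reflexivity.
  - replace (Nat.ltb (m + k) m) with false by (symmetry; apply Nat.ltb_ge; lia).
    replace (m + k - m)%nat with k by lia. reflexivity.
Qed.

Lemma finite_rank_Rsum n (M : nat -> nat -> nat -> R) :
  (forall k, finite_rank (M k)) -> finite_rank (fun x y => Rsum n (fun k => M k x y)).
Proof.
  intros H. induction n; simpl.
  - exists 0%nat, (fun _ _ => 0), (fun _ _ => 0). reflexivity.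
  - apply (finite_rank_add _ (M n)); auto.
Qed.

Lemma finite_rank_Re_Cmul (al be : nat -> C) : finite_rank (fun x y => Re (Cmul (al x) (be y))).
Proof.
  eapply finite_rank_ext;
    [|exact (finite_rank_add _ _ (finite_rank_rank1 (fun x => Re (al x)) (fun y => Re (be y)))
                                 (finite_rank_rank1 (fun x => - Im (al x)) (fun y => Im (be y))))].
  intros x y. simpl. ring.
Qed.

Definition schmidt_sum {I J} (r : nat) (u : nat -> I -> C) (v : nat -> J -> C) : I * J -> C :=
  fun ij => Csum r (fun k => Cmul (u k (fst ij)) (v k (snd ij))).

Lemma tensor_apply_schmidt_sum {I J} (P : op I) (Q : op J) r u v :
  is_projection P -> is_projection Q -> (forall k, (k < r)%nat -> l2 (u k) /\ l2 (v k)) ->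
  forall ij, tensor_apply P Q (schmidt_sum r u v) ij
             = schmidt_sum r (fun k => P (u k)) (fun k => Q (v k)) ij.
Proof.
  intros HP HQ Huv [i j]. unfold tensor_apply, schmidt_sum; simpl.
  assert (Hu : forall k, (k < r)%nat -> l2 (u k)) by (intros; apply Huv; auto).
  assert (Hv : forall k, (k < r)%nat -> l2 (v k)) by (intros; apply Huv; auto).
  transitivity (P (fun i' => Csum r (fun k => Cmul (Q (v k) j) (u k i'))) i).
  - f_equal. apply functional_extensionality. intros i'.
    rewrite (projection_Csum Q r (fun k => u k i') v HQ Hv).
    apply Csum_ext. intros k. apply C_ext; simpl; ring.
  - rewrite (projection_Csum P r (fun k => Q (v k) j) u HP Hu).
    apply Csum_ext. intros k. apply C_ext; simpl; ring.
Qed.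

Lemma inner_schmidt_sum {I J} r s u v u' v' :
  (forall k, (k < r)%nat -> l2 (u k) /\ l2 (v k)) ->
  (forall l, (l < s)%nat -> l2 (u' l) /\ l2 (v' l)) ->
  @inner (I * J) (schmidt_sum r u v) (schmidt_sum s u' v')
    (Csum r (fun k => Csum s (fun l => Cmul (inner_val (u k) (u' l)) (inner_val (v k) (v' l))))).
Proof.
  intros Huv Huv'. unfold inner.
  eapply has_sum_C_ext; [|apply (has_sum_C_Csum r (fun k ij => Csum s (fun l =>
      Cmul (Cmul (Cconj (u k (fst ij))) (u' l (fst ij)))
           (Cmul (Cconj (v k (snd ij))) (v' l (snd ij))))))].
  - intros [i j]. unfold schmidt_sum; simpl.
    rewrite Cconj_Csum, Cmul_Csum_l. apply Csum_ext. intros k.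
    rewrite Cmul_Csum_r. apply Csum_ext. intros l. apply C_ext; simpl; ring.
  - intros k Hk. apply has_sum_C_Csum. intros l Hl.
    destruct (Huv k Hk) as [Huk Hvk], (Huv' l Hl) as [Hul Hvl].
    apply (has_sum_C_mul (fun i => Cmul (Cconj (u k i)) (u' l i))
                         (fun j => Cmul (Cconj (v k j)) (v' l j)));
      first [apply abs_summable_C_inner | apply inner_valP]; auto.
Qed.

Lemma finite_schmidt_rank_correlation_finite_rank {I J} nA nB (psi : I * J -> C) A B p a b :
  produces nA nB psi A B p -> finite_schmidt_rank psi -> (a < nA)%nat -> (b < nB)%nat ->
  finite_rank (fun x y => p x y a b).
Proof.
  intros [_ [[HA _] [[HB _] Hp]]] [r [u [v [Huv Hpsi]]]] Ha Hb.
  replace psi with (schmidt_sum r u v) in Hp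
    by (apply functional_extensionality; intros [i j]; symmetry; apply Hpsi).
  assert (Hpuv : forall x y k, (k < r)%nat -> l2 (A x a (u k)) /\ l2 (B y b (v k))).
  { intros x y k Hk. split; [apply (HA x a Ha) | apply (HB y b Hb)]; apply Huv; auto. }
  assert (Hentry : forall x y, mkC (p x y a b) 0 = Csum r (fun k => Csum r (fun l =>
      Cmul (inner_val (u k) (A x a (u l))) (inner_val (v k) (B y b (v l)))))).
  { intros x y. eapply has_sum_C_unique; [exact (Hp x y a b Ha Hb)|].
    eapply has_sum_C_ext; [|exact (inner_schmidt_sum _ _ _ _ _ _ Huv (Hpuv x y))].
    intros ij. rewrite tensor_apply_schmidt_sum; auto. }
  apply (finite_rank_ext (fun x y => Rsum r (fun k => Rsum r (fun l =>
           Re (Cmul (inner_val (u k) (A x a (u l))) (inner_val (v k) (B y b (v l)))))))).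
  - intros x y. change (p x y a b) with (Re (mkC (p x y a b) 0)).
    rewrite Hentry, Re_Csum. apply Rsum_ext. intros k _. symmetry. apply Re_Csum.
  - apply finite_rank_Rsum. intros k. apply finite_rank_Rsum. intros l.
    apply finite_rank_Re_Cmul.
Qed.

(** * An infinitely entangled strategy *)

Definition geom (i : nat) : R := (/ 2) ^ i.

Lemma geom_pos i : 0 < geom i.
Proof. apply pow_lt. lra. Qed.

Lemma lsum_geom_seq k N : lsum geom (seq k N) <= 2 * geom k.
Proof.
  revert k; induction N as [|N IH]; intros k; simpl.
  - pose proof (geom_pos k). lra.
  - specialize (IH (S k)). unfold geom in *. simpl in *. lra.
Qed.

Lemma geom_summable : exists s, has_sum_R geom s.
Proof.
  apply (summable_bounded geom (fun i => Rlt_le _ _ (geom_pos i)) 2). intros L HN.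
  apply Rle_trans with (lsum geom (seq 0 (S (list_max L)))).
  - apply lsum_incl; auto. { intros; apply Rlt_le, geom_pos. }
    intros x Hx. apply in_seq. split; [lia|].
    assert (Hmax := proj1 (list_max_le L (list_max L)) (le_n _)).
    rewrite Forall_forall in Hmax. specialize (Hmax x Hx). lia.
  - eapply Rle_trans; [apply lsum_geom_seq|]. unfold geom. simpl. lra.
Qed.

Lemma unit_vector_normalize {T} (w : T -> R) s :
  has_sum_R (fun t => w t * w t) s -> 0 < s -> unit_vector (fun t => mkC (w t / sqrt s) 0).
Proof.
  intros Hs Hpos. unfold unit_vector.
  replace 1 with (/ s * s) by (field; lra).
  eapply has_sum_R_ext; [|exact (has_sum_R_scal _ (/ s) _ Hs)].
  intros t. unfold Cnorm2; simpl.
  assert (Hsq := sqrt_sqrt s (Rlt_le _ _ Hpos)).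
  assert (sqrt s <> 0) by (apply Rgt_not_eq, sqrt_lt_R0; lra).
  rewrite <- Hsq at 1. field. auto.
Qed.

Definition diag_amp (ij : nat * nat) : R :=
  if Nat.eqb (fst ij) (snd ij) then geom (fst ij) else 0.

Lemma diag_amp_sq_summable : exists s, has_sum_R (fun ij => diag_amp ij * diag_amp ij) s.
Proof.
  destruct geom_summable as [s Hs].
  assert (Hgeom : forall i, 0 <= geom i) by (intros; apply Rlt_le, geom_pos).
  eapply summable_le; [intros ij; apply Rle_0_sqr | | exact (has_sum_R_mul_ge0 _ _ _ _ Hgeom Hgeom Hs Hs)].
  intros [i j]. unfold diag_amp; simpl. destruct (Nat.eqb_spec i j) as [->|].
  - lra.
  - pose proof (geom_pos i); pose proof (geom_pos j). nra.
Qed.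

Definition diag_norm2 : R := epsilon (inhabits 0) (has_sum_R (fun ij => diag_amp ij * diag_amp ij)).

Lemma diag_norm2P : has_sum_R (fun ij => diag_amp ij * diag_amp ij) diag_norm2.
Proof. unfold diag_norm2. apply epsilon_spec, diag_amp_sq_summable. Qed.

Lemma diag_norm2_pos : 0 < diag_norm2.
Proof.
  assert (H := has_sum_R_ge_lsum _ (fun ij => Rle_0_sqr (diag_amp ij)) _ diag_norm2P
                 [(0, 0)%nat] ltac:(repeat constructor; auto)).
  unfold diag_amp, geom in H. simpl in H. rewrite Rsqr_1 in H. lra.
Qed.

Definition psi0 (ij : nat * nat) : C := mkC (diag_amp ij / sqrt diag_norm2) 0.

Lemma psi0_unit : unit_vector psi0.
Proof. exact (unit_vector_normalize _ _ diag_norm2P diag_norm2_pos). Qed.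

Definition mult_op {I} (m : I -> R) : op I := fun u i => Cmul (mkC (m i) 0) (u i).

Lemma mult_op_projection {I} (m : I -> R) :
  (forall i, m i = 0 \/ m i = 1) -> is_projection (mult_op m).
Proof.
  intros Hm. unfold is_projection, mult_op. split; [|split; [|split; [|split]]].
  - intros u [a Ha].
    apply (summable_le _ (fun i => Cnorm2 (u i)) a (fun i => Cnorm2_ge0 _)); auto.
    intros i. unfold Cnorm2. destruct (Hm i) as [E|E]; rewrite E; simpl; nra.
  - intros; apply C_ext; simpl; ring.
  - intros; apply C_ext; simpl; ring.
  - intros u _ i. destruct (Hm i) as [E|E]; rewrite E; apply C_ext; simpl; ring.
  - intros u v z _ _ H. eapply has_sum_C_ext; [|exact H]. intros i. apply C_ext; simpl; ring.
Qed.

Definition point_test (x a i : nat) : R :=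
  match a with
  | O => if Nat.eqb i x then 1 else 0
  | 1%nat => if Nat.eqb i x then 0 else 1
  | _ => 0
  end.

Lemma point_test_01 x a i : point_test x a i = 0 \/ point_test x a i = 1.
Proof. destruct a as [|[|a]]; simpl; destruct (Nat.eqb i x); auto. Qed.

Definition point_meas (x a : nat) : op nat := mult_op (point_test x a).

Lemma point_meas_PVM n : (2 <= n)%nat -> PVM_family n point_meas.
Proof.
  intros Hn. split.
  - intros x a _. apply mult_op_projection, point_test_01.
  - intros x u _ i. induction n as [|n IH]; [lia|].
    destruct (Nat.eq_dec n 1) as [->|Hn1].
    + unfold point_meas, mult_op; simpl. destruct (Nat.eqb i x); apply C_ext; simpl; ring.
    + simpl. rewrite IH by lia. destruct n as [|[|n]]; [lia..|].
      apply C_ext; simpl; ring.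
Qed.

Definition corr_density (x y a b : nat) (ij : nat * nat) : R :=
  Re (psi0 ij) * Re (psi0 ij) * (point_test x a (fst ij) * point_test y b (snd ij)).

Definition corr (x y a b : nat) : R := epsilon (inhabits 0) (has_sum_R (corr_density x y a b)).

Lemma corrP x y a b : has_sum_R (corr_density x y a b) (corr x y a b).
Proof.
  unfold corr. apply epsilon_spec.
  apply (summable_le _ (fun ij => Cnorm2 (psi0 ij)) 1); [| |exact psi0_unit].
  - intros ij. unfold corr_density. apply Rmult_le_pos; [apply Rle_0_sqr|].
    destruct (point_test_01 x a (fst ij)) as [-> | ->], (point_test_01 y b (snd ij)) as [-> | ->]; lra.
  - intros ij. unfold corr_density, Cnorm2. simpl.
    destruct (point_test_01 x a (fst ij)) as [-> | ->], (point_test_01 y b (snd ij)) as [-> | ->];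
      nra.
Qed.

Lemma corr_produced : produces 4 3 psi0 point_meas point_meas corr.
Proof.
  split; [exact psi0_unit|]. split; [apply point_meas_PVM; lia|].
  split; [apply point_meas_PVM; lia|].
  intros x y a b _ _. split.
  - eapply has_sum_R_ext; [|exact (corrP x y a b)].
    intros [i j]. unfold corr_density. simpl. ring.
  - eapply has_sum_R_ext; [|exact (@has_sum_R_0 (nat * nat))].
    intros [i j]. unfold corr_density. simpl. ring.
Qed.

Lemma corr_00 x y : corr x y 0 0 = if Nat.eqb x y then geom x * geom x / diag_norm2 else 0.
Proof.
  assert (Hsq := sqrt_sqrt _ (Rlt_le _ _ diag_norm2_pos)).
  assert (sqrt diag_norm2 <> 0) by (apply Rgt_not_eq, sqrt_lt_R0, diag_norm2_pos).
  apply (has_sum_R_unique (corr_density x y 0 0)); [apply corrP|].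
  destruct (Nat.eqb_spec x y) as [<-|Hxy].
  - replace (geom x * geom x / diag_norm2) with (corr_density x x 0 0 (x, x)).
    + apply has_sum_R_single. intros [i j] Hij. unfold corr_density; simpl.
      destruct (Nat.eqb_spec i x), (Nat.eqb_spec j x); subst; try congruence; ring.
    + unfold corr_density; simpl. unfold diag_amp; simpl. rewrite Nat.eqb_refl.
      rewrite <- Hsq at 3. field. auto.
  - eapply has_sum_R_ext; [|exact (@has_sum_R_0 (nat * nat))].
    intros [i j]. unfold corr_density, psi0, diag_amp, point_test; cbn [fst snd Re].
    destruct (Nat.eqb_spec i x), (Nat.eqb_spec j y), (Nat.eqb_spec i j);
      subst; try congruence; unfold Rdiv; ring.
Qed.

Module DiagonalKernel.
From mathcomp Require Import all_boot all_algebra Rstruct.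
Import GRing.Theory.
Local Open Scope ring_scope.

Lemma Rsum_big n f : Rsum n f = \sum_(i < n) f i.
Proof.
elim: n => [|n IH] /=; first by rewrite big_ord0.
by rewrite big_ord_recr /= IH.
Qed.

(* The (m+1) x (m+1) corner of the kernel factors as A *m B through m dimensions,
   yet is an invertible diagonal matrix. *)
Lemma not_finite_rank (d : nat -> R) : (forall x, d x <> 0%R) ->
  ~ finite_rank (fun x y => if Nat.eqb x y then d x else 0%R).
Proof.
move=> d_neq0 [m [a [b Hab]]].
pose A : 'M[R]_(m.+1, m) := \matrix_(x, t) a t x.
pose B : 'M[R]_(m, m.+1) := \matrix_(t, y) b t y.
pose D : 'M[R]_(m.+1) := diag_mx (\row_(i < m.+1) (d i)^-1).
have DAB1 : D *m (A *m B) *m 1%:M = 1%:M.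
  rewrite mulmx1 mul_diag_mx; apply/matrixP => i j; rewrite !mxE.
  have -> : \sum_(k < m) A i k * B k j = Rsum m (fun t => (a t i * b t j)%R).
    by rewrite Rsum_big; apply: eq_bigr => k _; rewrite !mxE.
  rewrite -Hab; case: (eqVneq i j) => [<-|nij].
    by rewrite Nat.eqb_refl /= mulVf //; apply/eqP; exact: d_neq0.
  have -> : Nat.eqb i j = false by apply/Nat.eqb_neq => /val_inj eij; rewrite eij eqxx in nij.
  by rewrite mulr0.
have := leq_trans (mulmx1_min_rank DAB1) (mulmx_max_rank A B).
by rewrite ltnn.
Qed.

End DiagonalKernel.

Theorem corollary2 : ~ (forall p : nat -> nat -> nat -> nat -> R, C_q 4 3 p <-> C_qs 4 3 p).
Proof.
  intros HqCqs.
  assert (Hqs : C_qs 4 3 corr) by (exists nat, nat, psi0, point_meas, point_meas; exact corr_produced).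
  destruct (proj2 (HqCqs corr) Hqs) as [I [J [psi [A [B [Hprod Hrank]]]]]].
  apply (DiagonalKernel.not_finite_rank (fun x => geom x * geom x / diag_norm2)).
  - intros x. pose proof (geom_pos x). pose proof diag_norm2_pos.
    apply Rgt_not_eq, Rdiv_lt_0_compat; nra.
  - apply (finite_rank_ext (fun x y => corr x y 0 0)); [intros x y; apply corr_00|].
    exact (finite_schmidt_rank_correlation_finite_rank 4 3 psi A B corr 0 0 Hprod Hrank
             ltac:(lia) ltac:(lia)).
Qed.
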